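(* For every $n$, there is a labeling scheme for $n\times n$ permutation matrices for dominance sum queries with labels of $O(\sqrt{n}\log n)$ bits: there is an encoder that, given any $n\times n$ permutation matrix $P$, assigns a label of $O(\sqrt{n}\log n)$ bits to each row and each column of $P$, and a decoder (depending only on $n$) that, given only the label of row $i$ and the label of column $j$, outputs $\sum_{i'\ge i,\,j'\ge j}P[i',j']$.
   Context: A permutation matrix here is a $0/1$ matrix in which every row and every column contains at most one entry equal to $1$. (Such matrices are used to represent unit-Monge matrices: for a permutation matrix $P$, the matrix $M[i,j]=\sum_{i'\ge i,j'\ge j}P[i',j']$ is unit-Monge.) *)

From mathcomp Require Import all_boot all_algebra.
Set Implicit Arguments. Unset Strict Implicit. Unset Printing Implicit Defensive.

Definition perm01_mx (n : nat) (P : 'M[nat]_n) : Prop :=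
  (forall i j, P i j = 0 \/ P i j = 1) /\
  (forall i j j', P i j = 1 -> P i j' = 1 -> j = j') /\
  (forall i i' j, P i j = 1 -> P i' j = 1 -> i = i').

Definition dom_sum (n : nat) (P : 'M[nat]_n) (i j : 'I_n) : nat :=
  \sum_(i' < n | i <= i') \sum_(j' < n | j <= j') P i' j'.

Definition label := seq bool.

(* Bound C * sqrt(n) * log n, written without square roots as
   (size)^2 <= C * n * (1 + floor(log2 n))^2. *)
Definition label_ok (C n : nat) (l : label) : Prop :=
  size l ^ 2 <= C * n * (trunc_log 2 n).+1 ^ 2.

From mathcomp Require Import all_boot all_algebra.
From mathcomp Require Import zify.
Set Implicit Arguments. Unset Strict Implicit. Unset Printing Implicit Defensive.

(* Cut the columns into blocks of width b, a power of two with n < b^2 <= 4n.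
   The label of row i stores i and, for each block k, the number of ones of P
   in rows >= i and columns >= k b.  The label of column j stores its block
   k = j / b and, for each column y of that block left of j, one plus the row
   of the 1 in column y (0 if there is none).  The dominance sum at (i, j) is
   the stored count for block k minus the number of those columns whose 1 lies
   in a row >= i.  A label is b + 1 numbers <= n, each written with
   floor(log2 n) + 1 bits. *)

Lemma sum_suffix_single_one (f : nat -> nat) (i n : nat) :
  (forall x, f x <= 1) -> (forall x x', f x = 1 -> f x' = 1 -> x = x') ->
  \sum_(i <= x < n) f x = (i < \sum_(0 <= x < n) x.+1 * f x).
Proof.
move=> f01 f_inj; rewrite (big_nat_widenl _ 0) // big_mkcond /=.
elim: n => [|n IHn]; first by rewrite !big_geq.
rewrite !big_nat_recr //=.
have /orP[/eqP fn1 | /eqP fn0] : (f n == 1) || (f n == 0) by have := f01 n; lia.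
  have f0 x : x \in index_iota 0 n -> f x = 0.
    rewrite mem_index_iota => /andP[_ lt_xn].
    by have := f01 x; have := f_inj x n; lia.
  rewrite !big1_seq => [|x /andP[_ /f0->]|x /andP[_ /f0->]];
    rewrite ?muln0 ?if_same //.
  by rewrite fn1 muln1 ltnS; case: (i <= n).
by rewrite fn0 muln0 if_same !addn0 IHn.
Qed.

Lemma big_nat_window (F : nat -> nat) m j b : m <= j <= m + b ->
  \sum_(m <= y < j) F y =
  \sum_(0 <= r < b) (if m + r < j then F (m + r) else 0).
Proof.
move=> /andP[le_mj le_jmb].
rewrite -{1}[m]add0n big_addn (big_nat_widen _ _ b) ?leq_subLR // big_mkcond /=.
by apply: eq_bigr => r _; rewrite ltn_subRL addnC.
Qed.

Fixpoint bits_of_nat (w x : nat) : bitseq :=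
  if w is w'.+1 then odd x :: bits_of_nat w' x./2 else [::].

Fixpoint nat_of_bits (s : bitseq) : nat :=
  if s is b :: s' then b + (nat_of_bits s').*2 else 0.

Lemma size_bits_of_nat w x : size (bits_of_nat w x) = w.
Proof. by elim: w x => [|w IHw] x //=; rewrite IHw. Qed.

Lemma bits_of_natK w x : x < 2 ^ w -> nat_of_bits (bits_of_nat w x) = x.
Proof.
elim: w x => [|w IHw] x /=; first by rewrite expn0; case: x.
by rewrite expnS mul2n -ltn_half_double => /IHw ->; rewrite odd_double_half.
Qed.

Definition pack (w : nat) (xs : seq nat) : bitseq :=
  flatten (map (bits_of_nat w) xs).

Definition unpack (w len : nat) (s : bitseq) : seq nat :=
  map nat_of_bits (reshape (nseq len w) s).

Lemma shape_pack w xs : shape (map (bits_of_nat w) xs) = nseq (size xs) w.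
Proof. by elim: xs => [|x xs IHxs] //=; rewrite size_bits_of_nat IHxs. Qed.

Lemma size_pack w xs : size (pack w xs) = size xs * w.
Proof. by rewrite size_flatten shape_pack sumn_nseq mulnC. Qed.

Lemma packK w xs :
  all (fun x => x < 2 ^ w) xs -> unpack w (size xs) (pack w xs) = xs.
Proof.
move=> /allP xs_small; rewrite /unpack -shape_pack flattenK -map_comp.
by rewrite -[RHS]map_id; apply/eq_in_map => x /xs_small /bits_of_natK.
Qed.

Section PermutationMatrixCounts.

Variables (n : nat) (P : 'M[nat]_n).

Definition mx_at (x y : nat) : nat :=
  match insub x : option 'I_n, insub y : option 'I_n with
  | Some i, Some j => P i j
  | _, _ => 0
  end.

Lemma mx_at_ord (i j : 'I_n) : mx_at i j = P i j.
Proof. by rewrite /mx_at !valK. Qed.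

Lemma mx_at_eq1 x y :
  mx_at x y = 1 -> exists i j : 'I_n, [/\ x = i, y = j & P i j = 1].
Proof.
rewrite /mx_at; case: (insubP 'I_n x) => [i _ <-|_] //.
by case: (insubP 'I_n y) => [j _ <-|_] // Pij; exists i, j.
Qed.

Definition col_pos (y : nat) : nat := \sum_(0 <= x < n) x.+1 * mx_at x y.

Definition dom_count (i m : nat) : nat :=
  \sum_(i <= x < n) \sum_(m <= y < n) mx_at x y.

Definition window_pos (b j r : nat) : nat :=
  let m := j %/ b * b in if m + r < j then col_pos (m + r) else 0.

Lemma dom_sumE (i j : 'I_n) : dom_sum P i j = dom_count i j.
Proof.
rewrite /dom_sum /dom_count big_geq_mkord; apply: eq_bigr => x _.
by rewrite big_geq_mkord; apply: eq_bigr => y _; rewrite mx_at_ord.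
Qed.

Hypothesis P01 : perm01_mx P.

Lemma mx_at_le1 x y : mx_at x y <= 1.
Proof.
rewrite /mx_at; case: (insubP 'I_n x) => [i _ _|_] //.
by case: (insubP 'I_n y) => [j _ _|_] //; case: (P01.1 i j) => ->.
Qed.

Lemma mx_at_col_inj y x x' : mx_at x y = 1 -> mx_at x' y = 1 -> x = x'.
Proof.
move=> /mx_at_eq1[i [j [-> -> Pij]]] /mx_at_eq1[i' [j' [-> /val_inj ej Pij']]].
by rewrite (P01.2.2 i i' j) // ej.
Qed.

Lemma mx_at_row_inj x y y' : mx_at x y = 1 -> mx_at x y' = 1 -> y = y'.
Proof.
move=> /mx_at_eq1[i [j [-> -> Pij]]] /mx_at_eq1[i' [j' [/val_inj ei -> Pij']]].
by rewrite (P01.2.1 i j j') // ei.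
Qed.

Lemma col_suffix_count i y : \sum_(i <= x < n) mx_at x y = (i < col_pos y).
Proof.
apply: sum_suffix_single_one => [x|x x']; first exact: mx_at_le1.
exact: mx_at_col_inj.
Qed.

Lemma col_pos_le y : col_pos y <= n.
Proof. by have := col_suffix_count n y; rewrite big_geq //; case: ltnP. Qed.

Lemma row_suffix_count_le1 x m : \sum_(m <= y < n) mx_at x y <= 1.
Proof.
rewrite (@sum_suffix_single_one (mx_at x)) ?leq_b1 // => [y|y y'].
  exact: mx_at_le1.
exact: mx_at_row_inj.
Qed.

Lemma dom_count_le i m : dom_count i m <= n.
Proof.
apply: (@leq_trans (\sum_(i <= x < n) 1)).
  by apply: leq_sum => x _; apply: row_suffix_count_le1.
by rewrite sum_nat_const_nat muln1 leq_subr.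
Qed.

Lemma window_pos_le b j r : window_pos b j r <= n.
Proof. by rewrite /window_pos; case: ifP => // _; apply: col_pos_le. Qed.

Lemma dom_sum_blocks b (i j : 'I_n) : 0 < b ->
  dom_sum P i j =
  dom_count i (j %/ b * b) - \sum_(0 <= r < b) (i < window_pos b j r).
Proof.
move=> b_gt0; set m := j %/ b * b.
have le_mj : m <= j by apply: leq_divM.
have le_jmb : j <= m + b.
  by rewrite /m {1}(divn_eq j b) leq_add2l ltnW ?ltn_pmod.
have -> : \sum_(0 <= r < b) (i < window_pos b j r) =
          \sum_(i <= x < n) \sum_(m <= y < j) mx_at x y.
  rewrite exchange_big_nat /= (@big_nat_window _ m j b) ?le_mj //.
  apply: eq_bigr => r _; rewrite /window_pos -/m.
  by case: ifP; rewrite ?col_suffix_count.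
have split_at_j : dom_count i m =
    \sum_(i <= x < n) \sum_(m <= y < j) mx_at x y + dom_count i j.
  rewrite -big_split; apply: eq_bigr => x _.
  by rewrite -big_cat_nat // ltnW.
by rewrite dom_sumE split_at_j addKn.
Qed.

End PermutationMatrixCounts.

Definition block_width (n : nat) : nat := 2 ^ (trunc_log 2 n)./2.+1.

Lemma block_width_gt0 n : 0 < block_width n.
Proof. by rewrite expn_gt0. Qed.

Lemma block_width_sq_gt n : n < block_width n ^ 2.
Proof.
apply: leq_trans (trunc_log_ltn n (isT : 1 < 2)) _.
rewrite -expnM leq_pexp2l //.
have := odd_double_half (trunc_log 2 n).
by have := leq_b1 (odd (trunc_log 2 n)); lia.
Qed.

Lemma block_width_sq_le n : 0 < n -> block_width n ^ 2 <= 4 * n.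
Proof.
move=> n_gt0; rewrite -expnM mulSn expnD leq_mul2l /=.
apply: leq_trans (trunc_logP (isT : 1 < 2) n_gt0); rewrite leq_pexp2l //.
by have := odd_double_half (trunc_log 2 n); lia.
Qed.

Definition row_entries n (P : 'M[nat]_n) (i : 'I_n) : seq nat :=
  val i :: mkseq (fun k => dom_count P i (k * block_width n)) (block_width n).

Definition col_entries n (P : 'M[nat]_n) (j : 'I_n) : seq nat :=
  j %/ block_width n :: mkseq (window_pos P (block_width n) j) (block_width n).

Definition dom_decode (rs cs : seq nat) : nat :=
  nth 0 rs (head 0 cs).+1 - \sum_(c <- behead cs) (head 0 rs < c).

Lemma size_row_entries n (P : 'M[nat]_n) i :
  size (row_entries P i) = (block_width n).+1.
Proof. by rewrite /= size_mkseq. Qed.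

Lemma size_col_entries n (P : 'M[nat]_n) j :
  size (col_entries P j) = (block_width n).+1.
Proof. by rewrite /= size_mkseq. Qed.

Lemma row_entries_le n (P : 'M[nat]_n) i :
  perm01_mx P -> all (leq^~ n) (row_entries P i).
Proof.
move=> P01; rewrite /= ltnW //=; apply/allP => _ /mapP[k _ ->].
exact: dom_count_le.
Qed.

Lemma col_entries_le n (P : 'M[nat]_n) j :
  perm01_mx P -> all (leq^~ n) (col_entries P j).
Proof.
move=> P01; rewrite /= (leq_trans (leq_div _ _) (ltnW (ltn_ord j))) /=.
by apply/allP => _ /mapP[r _ ->]; apply: window_pos_le.
Qed.

Lemma dom_decodeP n (P : 'M[nat]_n) i j : perm01_mx P ->
  dom_decode (row_entries P i) (col_entries P j) = dom_sum P i j.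
Proof.
move=> P01; set b := block_width n.
have j_div_lt : j %/ b < b.
  rewrite ltn_divLR ?block_width_gt0 // mulnn.
  exact: ltn_trans (ltn_ord j) (block_width_sq_gt n).
rewrite /dom_decode /= nth_mkseq // /mkseq big_map.
by rewrite (dom_sum_blocks P01 i j (block_width_gt0 n)) /index_iota subn0.
Qed.

Lemma pack_label_ok n xs : 0 < n -> size xs = (block_width n).+1 ->
  label_ok 16 n (pack (trunc_log 2 n).+1 xs).
Proof.
move=> n_gt0 size_xs; rewrite /label_ok size_pack size_xs expnMn leq_mul2r.
apply/orP; right.
apply: (@leq_trans ((2 * block_width n) ^ 2)).
  by rewrite leq_exp2r // mul2n -addnn -addn1 leq_add2l block_width_gt0.
by rewrite expnMn -[16]/(4 * 4) -mulnA leq_pmul2l // block_width_sq_le.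
Qed.

Theorem lemma15 :
  exists C : nat, forall n : nat,
    exists (enc_row enc_col : 'M[nat]_n -> 'I_n -> label)
           (dec : label -> label -> nat),
      forall P : 'M[nat]_n, perm01_mx P ->
        (forall i : 'I_n, label_ok C n (enc_row P i)) /\
        (forall j : 'I_n, label_ok C n (enc_col P j)) /\
        (forall i j : 'I_n, dec (enc_row P i) (enc_col P j) = dom_sum P i j).
Proof.
exists 16 => n; pose w := (trunc_log 2 n).+1; pose len := (block_width n).+1.
exists (fun P i => pack w (row_entries P i)),
  (fun P j => pack w (col_entries P j)),
  (fun lr lc => dom_decode (unpack w len lr) (unpack w len lc)) => P P01.
have unpack_pack xs :
    size xs = len -> all (leq^~ n) xs -> unpack w len (pack w xs) = xs.
  move=> <- xs_le; apply/packK/(sub_all _ xs_le) => x /leq_ltn_trans; apply.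
  exact: trunc_log_ltn.
have n_gt0 (i : 'I_n) : 0 < n by apply: leq_ltn_trans (ltn_ord i).
split; [|split] => [i|j|i j].
- exact: pack_label_ok (n_gt0 i) (size_row_entries P i).
- exact: pack_label_ok (n_gt0 j) (size_col_entries P j).
by rewrite !unpack_pack ?size_row_entries ?size_col_entries ?row_entries_le
  ?col_entries_le ?dom_decodeP.
Qed.
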